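(* Let $D$ be an integral domain with quotient field $K$ such that the intersection of all maximal ideals of $D$ of finite index is $(0)$, and let $n\ge 1$. Let $f(x)=g(x)/d$ with $g\in D[x]$ and $d\in D\setminus\{0\}$. Then $f\in \mathrm{Int}_K(M_n(D))$ if and only if, for every monic polynomial $h\in D[x]$ of degree $n$ that is irreducible in $D[x]$, there exist $q,r\in D[x]$ with $g = qh + d\,r$ (i.e. $g$ is divisible by $h$ modulo $dD[x]$).
   Context: $M_n(D)$ denotes the ring of $n\times n$ matrices over $D$. $\mathrm{Int}_K(M_n(D))=\{f\in K[x]\mid f(C)\in M_n(D)\text{ for all } C\in M_n(D)\}$, where $f(C)$ is computed in $M_n(K)$ with scalars acting as scalar matrices. *)

From HB Require Import structures.
From mathcomp Require Import all_boot all_order all_algebra.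
Set Implicit Arguments. Unset Strict Implicit. Unset Printing Implicit Defensive.
Import Order.TTheory GRing.Theory Num.Theory.
Local Open Scope ring_scope.

Definition toK (D : idomainType) : D -> {fraction D} := @FracField.tofrac D.

Definition is_ideal (D : idomainType) (I : D -> Prop) : Prop :=
  [/\ I 0, (forall a b, I a -> I b -> I (a + b)) & (forall r a, I a -> I (r * a))].

Definition is_maximal_ideal (D : idomainType) (I : D -> Prop) : Prop :=
  [/\ is_ideal I, ~ I 1 &
      forall J : D -> Prop, is_ideal J -> (forall x, I x -> J x) ->
        (forall x, J x -> I x) \/ J 1].

(* I has finite index in D: D/I is finite, i.e. finitely many residues
   represent every class modulo I. *)
Definition finite_index (D : idomainType) (I : D -> Prop) : Prop :=
  exists s : seq D, forall x : D, exists2 y, y \in s & I (x - y).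

Definition fin_max_ideals_meet_zero (D : idomainType) : Prop :=
  forall x : D,
    (forall I : D -> Prop, is_maximal_ideal I -> finite_index I -> I x) -> x = 0.

(* f in Int_K(M_n(D)) with n = m.+1: f(C), computed in M_n(K), lies in M_n(D)
   for every C in M_n(D). *)
Definition IntK_Mn (D : idomainType) (m : nat) (f : {poly {fraction D}}) : Prop :=
  forall C : 'M[D]_m.+1,
    exists B : 'M[D]_m.+1, horner_mx (map_mx (@toK D) C) f = map_mx (@toK D) B.

Definition irreducible_in (D : idomainType) (p : {poly D}) : Prop :=
  [/\ p != 0, p \isn't a GRing.unit &
      forall a b : {poly D}, p = a * b -> a \is a GRing.unit \/ b \is a GRing.unit].

From HB Require Import structures.
From mathcomp Require Import all_boot all_order all_algebra all_field.
From mathcomp Require Import ring zify boolp.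
Set Implicit Arguments. Unset Strict Implicit. Unset Printing Implicit Defensive.
Import GRing.Theory.
Local Open Scope ring_scope.

(* Write n = m + 1 and f = g / d.  Since d is invertible in K, f(C) lies in
   M_n(D) exactly when g(C) = d * B for some B in M_n(D), so the theorem is
   a statement about evaluations over D (IntK_Mn_scaledE).
   (=>) For a monic h of degree n, evaluate g at the companion matrix C_h.
   By Cayley-Hamilton, g(C_h) = (g mod h)(C_h), whose first row is the
   coefficient vector of g mod h; so d divides every coefficient of g mod h.
   (<=) Given C, choose a maximal ideal M of finite index with d not in M
   (the meet of these ideals is 0).  D/M is a finite field, which has
   monic irreducible polynomials of every degree; lifting one of them and
   correcting it modulo d yields a monic h of degree n, irreducible in D[x],
   with h = char_poly C + d t.  Then g = q h + d r and Cayley-Hamilton give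
   g(C) = d * (q t + r)(C). *)

Lemma map_mx_toK_inj (D : idomainType) (m n : nat) :
  injective (map_mx (@toK D) : 'M_(m, n) -> 'M_(m, n)).
Proof.
move=> A B /matrixP eqAB; apply/matrixP => i j.
by have := eqAB i j; rewrite !mxE => /eqP; rewrite tofrac_eq => /eqP.
Qed.

Lemma IntK_Mn_scaledE (D : idomainType) (m : nat) (g : {poly D}) (d : D) :
  d != 0 ->
  IntK_Mn m (map_poly (@toK D) g * ((toK d)^-1)%:P) <->
  (forall C : 'M[D]_m.+1, exists B, horner_mx C g = d *: B).
Proof.
move=> d0; have dK : toK d != 0 by rewrite tofrac_eq0.
have hornerE (C : 'M[D]_m.+1) :
    horner_mx (map_mx (@toK D) C) (map_poly (@toK D) g * ((toK d)^-1)%:P)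
    = (toK d)^-1 *: map_mx (@toK D) (horner_mx C g).
  by rewrite rmorphM /= horner_mx_C map_horner_mx -mulmxE mul_mx_scalar.
split=> [IntK C | scaled C].
  have [B eqB] := IntK C; exists B; apply: map_mx_toK_inj.
  by rewrite map_mxZ -eqB hornerE scalerA mulfV ?scale1r.
have [B eqB] := scaled C; exists B.
by rewrite hornerE eqB map_mxZ scalerA mulVf ?scale1r.
Qed.

Section Companion.
Variables (R : comNzRingType) (m : nat) (h : {poly R}).

(* The companion matrix of h, of size m + 1, indexed so that its first row
   is the row vector e_0 and e_i * companion = e_(i+1) for i < m. *)
Definition companion : 'M[R]_m.+1 :=
  \matrix_(i, j) if i == m :> nat then - h`_j else (i.+1 == j :> nat)%:R.

Lemma char_poly_companion :
  h \is monic -> size h = m.+2 -> char_poly companion = h.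
Proof.
move=> mh szh; have e : (size h).-1 = m.+1 by rewrite szh.
have -> : companion = castmx (e, e) (companionmx h).
  by apply/matrixP => i j; rewrite castmxE !mxE /= szh.
have char_poly_cast k l (ekl : k = l) (A : 'M[R]_k) :
    char_poly (castmx (ekl, ekl) A) = char_poly A.
  by case: l / ekl; rewrite castmx_id.
by rewrite char_poly_cast companionmxK.
Qed.

Lemma companion_pow_row0 (i : nat) (j : 'I_m.+1) :
  (i <= m)%N -> (companion ^+ i) ord0 j = (i == j :> nat)%:R.
Proof.
elim: i j => [|i IH] j le_im; first by rewrite expr0 mxE.
have lt_im1 : (i < m.+1)%N by apply: ltn_trans le_im _.
have le_im' : (i <= m)%N by apply: ltnW.
rewrite exprSr mxE (bigD1 (Ordinal lt_im1)) //= (IH _ le_im') eqxx mul1r.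
rewrite big1 ?addr0; last first.
  move=> k; rewrite -val_eqE /= eq_sym => /negPf nik.
  by rewrite (IH _ le_im') nik mul0r.
by rewrite mxE /= ltn_eqF.
Qed.

Lemma horner_companion_row0 (p : {poly R}) (j : 'I_m.+1) :
  (size p <= m.+1)%N -> (horner_mx companion p) ord0 j = p`_j.
Proof.
move=> szp; have p_sum : p = \sum_(i < m.+1) p`_i *: 'X^i.
  rewrite -poly_def; apply/polyP => k; rewrite coef_poly.
  by case: ltnP => // le_mk; rewrite nth_default // (leq_trans szp le_mk).
have horner_monomial (i : 'I_m.+1) :
    horner_mx companion (p`_i *: 'X^i) ord0 j = p`_i * (i == j :> nat)%:R.
  by rewrite horner_mxZ rmorphXn /= horner_mx_X mxE companion_pow_row0 // -ltnS.
rewrite {1}p_sum rmorph_sum summxE (bigD1 j) //= horner_monomial eqxx mulr1.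
rewrite big1 ?addr0 // => i; rewrite -val_eqE /= => /negPf nij.
by rewrite horner_monomial nij mulr0.
Qed.
End Companion.

(* Forward direction: if d divides every g(C), then g is divisible by any
   monic h of degree m + 1 modulo d D[x]; test on the companion matrix. *)
Lemma divisible_of_scaled (D : idomainType) (m : nat) (g h : {poly D}) (d : D) :
  (forall C : 'M[D]_m.+1, exists B, horner_mx C g = d *: B) ->
  h \is monic -> size h = m.+2 -> exists q r : {poly D}, g = q * h + d%:P * r.
Proof.
move=> scaled mh szh; have [B eqB] := scaled (companion m h).
have divg : g = (g %/ h) * h + g %% h.
  by have := Pdiv.Idomain.divp_eq g h; rewrite (monicP mh) expr1n scale1r.
have sz_mod : (size (g %% h)%R <= m.+1)%N.
  by rewrite -ltnS -szh Pdiv.Idomain.ltn_modp monic_neq0.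
have horner_mod : horner_mx (companion m h) g = horner_mx (companion m h) (g %% h).
  have vanish_h : horner_mx (companion m h) h = 0.
    by rewrite -{2}(char_poly_companion mh szh) Cayley_Hamilton.
  by rewrite {1}divg rmorphD rmorphM /= vanish_h mulr0 add0r.
exists (g %/ h), (rVpoly (row 0 B)); rewrite {1}divg; congr (_ + _).
apply/polyP => k; rewrite coefCM coef_rVpoly.
case: insubP => [j _ <- | ]; last first.
  by rewrite -leqNgt => le_mk; rewrite mulr0 nth_default // (leq_trans sz_mod le_mk).
by rewrite mxE -(horner_companion_row0 h) // -horner_mod eqB mxE.
Qed.

Lemma scaled_of_divisible (R : comNzRingType) (m : nat) (C : 'M[R]_m.+1)
    (g h q r t : {poly R}) (d : R) :
  h = char_poly C + d%:P * t -> g = q * h + d%:P * r ->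
  horner_mx C g = d *: horner_mx C (q * t + r).
Proof.
move=> -> ->; rewrite !(rmorphD, rmorphM) /= Cayley_Hamilton horner_mx_C add0r.
by rewrite -!mulmxE !mul_scalar_mx -scalemxAr -scalerDr.
Qed.

(* The minimal polynomial over the base field F of any element of an
   extension has coefficients in F and is irreducible over F. *)
Lemma minPoly_descends (F : fieldType) (L : fieldExtType F) (z : L) :
  exists p : {poly F},
    [/\ p \is monic, size p = (adjoin_degree 1 z).+1 & irreducible_poly p].
Proof.
have /polyOver1P[p Dp] := minPolyOver 1 z.
have szp : size p = (adjoin_degree 1 z).+1.
  by rewrite -size_minPoly Dp size_map_poly.
exists p; split=> //; first by rewrite -(map_monic (in_alg L)) -Dp monic_minPoly.
split=> [|q szq dvq_p].
  by rewrite szp ltnS adjoin_degreeE divn_gt0 ?adim_gt0 // dimvS ?subv_adjoin.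
have dvq : map_poly (in_alg L) q %| minPoly 1 z by rewrite Dp dvdp_map.
have /orP[] := minPoly_irr (alg_polyOver 1 q) dvq; first by rewrite Dp eqp_map.
rewrite -(rmorph1 (map_poly (in_alg L))) eqp_map => /eqp_size.
by rewrite size_poly1 => sq1; rewrite sq1 in szq.
Qed.

(* A finite field F has an extension with a subfield of any dimension
   n > 0 over F: the roots of X^(|F|^n) - X in its splitting field. *)
Lemma finField_subfield_of_dim (F : finFieldType) (n : nat) : (0 < n)%N ->
  exists (L : splittingFieldType F) (E : {subfield L}), \dim E = n.
Proof.
move=> n_gt0; pose Q := #|F|; pose m := (Q ^ n)%N.
have Q_gt1 : (1 < Q)%N by apply: finNzRing_gt1.
have m_gt1 : (1 < m)%N by rewrite -(exp1n n) ltn_exp2r.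
have size_qp : size ('X^m - 'X : {poly F}) = m.+1.
  by rewrite size_polyDl ?size_polyXn // size_polyN size_polyX ltnS.
have /FinSplittingFieldFor[/= L [zs DqL _]] : 'X^m - 'X != 0 :> {poly F}.
  by rewrite -size_poly_eq0 size_qp.
rewrite rmorphB rmorphXn /= map_polyX in DqL.
have /finField_galois_generator[/= a _ Da] : (1 <= {:L})%VS by apply: sub1v.
rewrite dimv1 expn1 in Da.
exists L, (fixedField [set (a ^+ n)%g]).
(* The roots of X^m - X are the fixed points of the n-th power of the
   Frobenius automorphism a. *)
have frobn (z : L) : (a ^+ n)%g z = z ^+ m.
  rewrite /m; elim: (n) => [|i IHi]; first by rewrite gal_id.
  by rewrite expgSr expnSr exprM -IHi galM ?Da ?memvf.
have in_zs : zs =i fixedField [set (a ^+ n)%g].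
  move=> z; rewrite -root_prod_XsubC -(eqp_root DqL) /root !hornerE subr_eq0.
  apply/eqP/fixedFieldP; rewrite ?memvf //.
  - by move=> zE x /set1P ->; rewrite frobn.
  - by move=> fixz; rewrite -frobn fixz ?set11.
(* These m roots are distinct, since the derivative of X^m - X is -1. *)
have [p _ pcharFp] := finPcharP F.
have pcharL : p \in [pchar L] by rewrite pchar_lalg.
have m0 : (m%:R : L) = 0.
  have cardF : Q = (p ^ logn p Q)%N := card_pprimeChar pcharFp.
  have pQ : (p %| Q)%N.
    by move: cardF Q_gt1; case: (logn p Q) => [|k] -> //; rewrite dvdn_exp.
  by apply/eqP; rewrite -(dvdn_pcharf pcharL) dvdn_exp.
have Uzs : uniq zs.
  rewrite -separable_prod_XsubC -(eqp_separable DqL) unlock.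
  rewrite derivB derivXn derivX -mulr_natr -polyC_natr m0 mulr0 sub0r.
  have -> : (-1 : {poly L}) = (-1) *: 1 by rewrite scaleN1r.
  by rewrite coprimepZr ?coprimep1 // oppr_eq0 oner_eq0.
have szs : size zs = m.
  apply: succn_inj; rewrite -(size_prod_XsubC _ id) -(eqp_size DqL).
  by rewrite size_polyDl ?size_polyXn // size_polyN size_polyX ltnS.
(* So the fixed field has |F|^n elements, hence dimension n. *)
pose Fm := FinFieldExtType L.
apply/eqP; rewrite -(eqn_exp2l _ _ Q_gt1) -(@card_vspace F Fm) -/m -szs.
by rewrite -(@card_uniqP Fm zs Uzs); apply/eqP/eq_card => z; rewrite /= in_zs.
Qed.

(* A finite field has monic irreducible polynomials of every degree n > 0:
   the minimal polynomial of a primitive element of a subfield of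
   dimension n. *)
Lemma finField_irreducible_of_degree (F : finFieldType) (n : nat) : (0 < n)%N ->
  exists p : {poly F}, [/\ p \is monic, size p = n.+1 & irreducible_poly p].
Proof.
move=> n_gt0; have [L [E dimE]] := finField_subfield_of_dim F n_gt0.
have /and3P[_ sepE _] := finField_galois (sub1v E).
have [p [mp szp irp]] := minPoly_descends (separable_generator 1 E).
exists p; split=> //; rewrite szp adjoin_degreeE.
by rewrite -(eq_adjoin_separable_generator sepE (sub1v E)) dimv1 divn1 dimE.
Qed.

Section LiftingIrreducibles.
Variables (D : idomainType) (F : fieldType) (pi : {rmorphism D -> F}).
Variable rep : F -> D.
Hypothesis repK : cancel rep pi.

(* A monic polynomial whose reduction is irreducible over the field F is
   irreducible in D[x]: a factorisation has unit leading coefficients, and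
   its reduction forces one factor to be constant. *)
Lemma irreducible_in_of_map (h : {poly D}) :
  h \is monic -> irreducible_poly (map_poly pi h) -> irreducible_in h.
Proof.
move=> mh [szh irh]; have szh' : size (map_poly pi h) = size h.
  by rewrite size_map_poly_id0 // (monicP mh) rmorph1 oner_neq0.
split; first exact: monic_neq0.
  by rewrite poly_unitE -szh' gtn_eqF.
move=> A B eAB.
have lAB : lead_coef A * lead_coef B = 1 by rewrite -lead_coefM -eAB (monicP mh).
have uA : lead_coef A \is a GRing.unit by apply/unitrPr; exists (lead_coef B).
have uB : lead_coef B \is a GRing.unit.
  by apply/unitrPr; exists (lead_coef A); rewrite mulrC.
have szhAB : size h = (size A + size B).-1.
  by rewrite eAB size_proper_mul // lAB oner_neq0.
have unit_of_size1 (P : {poly D}) :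
    lead_coef P \is a GRing.unit -> size P = 1%N -> P \is a GRing.unit.
  by move=> uP sP; rewrite poly_unitE sP eqxx /=; move: uP; rewrite /lead_coef sP.
have [sA1|sAn1] := eqVneq (size A) 1%N; first by left; apply: unit_of_size1.
have piA : pi (lead_coef A) != 0.
  apply/eqP => piA0; move/(congr1 pi): lAB.
  by rewrite rmorphM rmorph1 piA0 mul0r => /eqP; rewrite eq_sym oner_eq0.
have szA : size (map_poly pi A) = size A := size_map_poly_id0 piA.
have dvdA : map_poly pi A %| map_poly pi h by rewrite eAB rmorphM dvdp_mulIl.
have /eqp_size : map_poly pi A %= map_poly pi h by apply: irh; rewrite ?szA.
rewrite szA szh' => sAh.
by right; apply: unit_of_size1 => //; move: szhAB szh; rewrite szh' sAh; lia.
Qed.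

Lemma congruent_lift (h : {poly D}) (p : {poly F}) (d : D) (n : nat) :
  pi d != 0 -> h \is monic -> size h = n.+1 -> p \is monic -> size p = n.+1 ->
  exists t : {poly D}, let h' := h + d%:P * t in
    [/\ h' \is monic, size h' = n.+1 & map_poly pi h' = p].
Proof.
move=> pid mh szh mp szp.
pose t := (rep (pi d)^-1)%:P * \poly_(i < n) (rep p`_i - h`_i); exists t => h'.
have szdt : (size (d%:P * t)%R < size h)%N.
  rewrite mulrA -polyCM mul_polyC szh ltnS.
  exact: leq_trans (size_scale_leq _ _) (size_poly _ _).
split; first by rewrite monicE lead_coefDl // -monicE.
  by rewrite size_polyDl // szh.
apply/polyP => i; rewrite coef_map /= coefD !coefCM coef_poly rmorphD !rmorphM /=.
rewrite repK mulrA mulfV // mul1r; case: ltnP => [lt_in | le_ni].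
  by rewrite rmorphB repK addrC subrK.
rewrite rmorph0 addr0; case: (ltngtP i n) le_ni => // [lt_ni|->] _.
  by rewrite !nth_default ?rmorph0 ?szh ?szp.
move: mh mp; rewrite !monicE /lead_coef szh szp /= => /eqP -> /eqP ->.
by rewrite rmorph1.
Qed.
End LiftingIrreducibles.

Lemma irreducible_lift (D : idomainType) (F : finFieldType)
    (pi : {rmorphism D -> F}) (rep : F -> D) (d : D) (n : nat) (h : {poly D}) :
  cancel rep pi -> pi d != 0 -> (0 < n)%N -> h \is monic -> size h = n.+1 ->
  exists t : {poly D}, let h' := h + d%:P * t in
    [/\ h' \is monic, size h' = n.+1 & irreducible_in h'].
Proof.
move=> repK pid n_gt0 mh szh.
have [p [mp szp irp]] := finField_irreducible_of_degree F n_gt0.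
have [t [mh' szh' maph']] := congruent_lift repK pid mh szh mp szp.
exists t; split=> //.
by apply: (irreducible_in_of_map (pi := pi)) mh' _; rewrite maph'.
Qed.

Lemma maximal_ideal_bezout (D : idomainType) (M : D -> Prop) (x : D) :
  is_maximal_ideal M -> ~ M x -> exists m r, M m /\ 1 = m + r * x.
Proof.
case=> [[M0 MD MM] _ Mmax] nMx.
pose J y := exists m r, M m /\ y = m + r * x.
have Jideal : is_ideal J.
  split; first by exists 0, 0; split => //; ring.
    move=> _ _ [m1 [r1 [M1 ->]]] [m2 [r2 [M2 ->]]].
    by exists (m1 + m2), (r1 + r2); split; [exact: MD | ring].
  move=> a _ [m1 [r1 [M1 ->]]].
  by exists (a * m1), (a * r1); split; [exact: MM | ring].
have MJ y : M y -> J y by move=> My; exists y, 0; split => //; ring.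
have [JM|//] := Mmax J Jideal MJ.
by case: nMx; apply: JM; exists 0, 1; split => //; ring.
Qed.

Section ResidueField.
Local Open Scope quotient_scope.
Variables (D : idomainType) (M : D -> Prop) (s : seq D).
Hypotheses (Mmax : is_maximal_ideal M)
  (Ms : forall x, exists2 y, y \in s & M (x - y)).

Lemma maximal_ideal_opp (x : D) : M x -> M (- x).
Proof. by case: Mmax => [[_ _ MM] _ _] Mx; rewrite -mulN1r; apply: MM. Qed.

(* M as a (classically decidable) ideal predicate, to form the quotient
   ring D/M. *)
Definition Mpred : {pred D} := fun x => `[< M x >].

Lemma Mpred_idealr : idealr_closed Mpred.
Proof.
case: Mmax => [[M0 MD MM] M1 _]; split; [exact/asboolP | exact/asboolP |].
move=> a u v /asboolP Mu /asboolP Mv; apply/asboolP.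
by apply: MD => //; apply: MM.
Qed.

HB.instance Definition _ := isIdealr.Build D Mpred Mpred_idealr.

Definition residue := {ideal_quot Mpred}.
HB.instance Definition _ := GRing.ComNzRing.on residue.

Lemma residue_eq0 (x : D) : (\pi_residue x == 0) = `[< M x >].
Proof. by rewrite piE Quotient.equivE subr0. Qed.

Lemma residue_inv_exists (a : residue) :
  exists b : residue, (a == 0) || (b * a == 1).
Proof.
rewrite -[a]reprK residue_eq0.
have [Ma|nMa] := pselect (M (repr a)).
  by exists 0; apply/orP; left; apply/asboolP.
have [m [r [Mm e]]] := maximal_ideal_bezout Mmax nMa.
exists (\pi_residue r); apply/orP; right.
have -> : 1 = \pi_residue 1 by rewrite rmorph1.
rewrite -rmorphM piE Quotient.equivE; apply/asboolP.
have -> : r * repr a - 1 = - m by rewrite e; ring.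
exact: maximal_ideal_opp.
Qed.

Definition residue_inv (a : residue) : residue :=
  if a == 0 then 0 else xchoose (residue_inv_exists a).

Lemma residue_mulVf (a : residue) : a != 0 -> residue_inv a * a = 1.
Proof.
rewrite /residue_inv => /negPf a0.
by have := xchooseP (residue_inv_exists a); set b := xchoose _; rewrite a0 => /eqP.
Qed.

Lemma residue_inv0 : residue_inv 0 = 0.
Proof. by rewrite /residue_inv; set b := xchoose _; rewrite eqxx. Qed.

HB.instance Definition _ :=
  GRing.ComNzRing_isField.Build residue residue_mulVf residue_inv0.

(* D/M is finite: every residue class meets s, which gives an injection of
   D/M into 'I_(size s).+1. *)
Definition residue_index (a : residue) : 'I_(size s).+1 :=
  inord (find (fun y => \pi_residue y == a) s).

Definition residue_of_index (i : 'I_(size s).+1) : option residue :=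
  Some (\pi_residue (nth 0 s i)).

Lemma residue_indexK : pcancel residue_index residue_of_index.
Proof.
move=> a; have [y ys May] := Ms (repr a).
have has_a : has (fun y => \pi_residue y == a) s.
  apply/hasP; exists y => //; rewrite -[a]reprK piE Quotient.equivE.
  by apply/asboolP; rewrite -opprB; apply: maximal_ideal_opp.
rewrite /residue_of_index /residue_index inordK ?ltnS ?find_size //.
by congr Some; apply/eqP; exact: (nth_find 0 has_a).
Qed.

HB.instance Definition _ := PCanIsCountable residue_indexK.
HB.instance Definition _ := isFinite.Build residue (pcan_enumP residue_indexK).

Lemma residue_lift (d : D) (n : nat) (h : {poly D}) :
  ~ M d -> (0 < n)%N -> h \is monic -> size h = n.+1 ->
  exists t : {poly D}, let h' := h + d%:P * t in
    [/\ h' \is monic, size h' = n.+1 & irreducible_in h'].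
Proof.
move=> nMd; apply: (@irreducible_lift D residue \pi_residue repr) => //.
  exact: reprK.
by rewrite residue_eq0; apply/asboolP.
Qed.
End ResidueField.

Lemma exists_maximal_avoiding (D : idomainType) (d : D) :
  fin_max_ideals_meet_zero D -> d != 0 ->
  exists M : D -> Prop, [/\ is_maximal_ideal M, finite_index M & ~ M d].
Proof.
move=> meet0 d0; apply: contrapT => none.
move/eqP: d0; apply; apply: meet0 => M Mmax Mfin.
by apply: contrapT => nMd; apply: none; exists M.
Qed.

Theorem mainTheorem1 (D : idomainType) (m : nat) (g : {poly D}) (d : D) :
  fin_max_ideals_meet_zero D ->
  d != 0 ->
  IntK_Mn m (map_poly (@toK D) g * ((toK d)^-1)%:P) <->
  (forall h : {poly D},
      h \is monic -> size h = m.+2 -> irreducible_in h ->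
      exists q r : {poly D}, g = q * h + d%:P * r).
Proof.
move=> meet0 d0; rewrite IntK_Mn_scaledE //.
split=> [scaled h mh szh _ | divisible C].
  exact: divisible_of_scaled scaled mh szh.
have [M [Mmax [s Ms] nMd]] := exists_maximal_avoiding meet0 d0.
have [t [mh' szh' irh']] :=
  residue_lift Mmax Ms nMd (ltn0Sn m) (char_poly_monic C) (size_char_poly C).
have [q [r eqg]] := divisible _ mh' szh' irh'.
by exists (horner_mx C (q * t + r)); apply: scaled_of_divisible eqg.
Qed.
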